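(* Let $A_1$ and $A_2$ be simple and covering literals that are unifiable with a most general unifier $\sigma$. Then $A_1\sigma$ is simple.
   Context: A compound term is a term that is neither a variable nor a constant. $\mathrm{Var}(E)$ denotes the set of variables of $E$. A literal is simple if each argument is a variable, a constant, or a term $f(u_1,\dots,u_n)$ with each $u_i$ a variable or a constant. A literal is covering if every compound term $t$ occurring in it satisfies $\mathrm{Var}(t)$ equal to the set of variables of the literal. *)

From Stdlib Require Import List.
Import ListNotations.

Inductive term : Type :=
| Var : nat -> term
| Fun : nat -> list term -> term.

Record literal : Type := Lit { lsign : bool; lpred : nat; largs : list term }.

Definition is_var (t : term) : Prop := exists x, t = Var x.
Definition is_const (t : term) : Prop := exists c, t = Fun c [].
Definition is_compound (t : term) : Prop := ~ is_var t /\ ~ is_const t.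

Inductive var_in (x : nat) : term -> Prop :=
| vi_var : var_in x (Var x)
| vi_fun : forall f ts t, In t ts -> var_in x t -> var_in x (Fun f ts).

Definition var_in_lit (x : nat) (L : literal) : Prop :=
  exists t, In t (largs L) /\ var_in x t.

Inductive subterm (s : term) : term -> Prop :=
| st_refl : subterm s s
| st_fun : forall f ts t, In t ts -> subterm s t -> subterm s (Fun f ts).

Definition occurs_in_lit (t : term) (L : literal) : Prop :=
  exists u, In u (largs L) /\ subterm t u.

Definition var_or_const (t : term) : Prop := is_var t \/ is_const t.

Definition simple_lit (L : literal) : Prop :=
  forall t, In t (largs L) ->
    is_var t \/ is_const t \/
    exists f us, t = Fun f us /\ forall u, In u us -> var_or_const u.

Definition covering_lit (L : literal) : Prop :=
  forall t, occurs_in_lit t L -> is_compound t ->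
    forall x, var_in x t <-> var_in_lit x L.

Definition subst := nat -> term.

Fixpoint tsubst (s : subst) (t : term) : term :=
  match t with
  | Var x => s x
  | Fun f ts => Fun f (map (tsubst s) ts)
  end.

Definition lsubst (s : subst) (L : literal) : literal :=
  Lit (lsign L) (lpred L) (map (tsubst s) (largs L)).

Definition unifier (s : subst) (L1 L2 : literal) : Prop :=
  lsubst s L1 = lsubst s L2.

Definition mgu (s : subst) (L1 L2 : literal) : Prop :=
  unifier s L1 L2 /\
  forall th, unifier th L1 L2 ->
    exists eta, forall x, th x = tsubst eta (s x).

From Stdlib Require Import List Lia ClassicalEpsilon.
Import ListNotations.

(* Since [sigma] is most general, every unifier [theta] factors as [eta o sigma], and
   [sigma y] then has at most the shape of [theta y].  So it suffices to build a
   unifier whose values are shallow: [theta] cuts [sigma y] down to depth two when [y]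
   is "deep" (aligned with a compound argument of the other literal) and to depth one
   otherwise.  Covering gives [size (sigma y) > size (sigma x)] for a deep [y] and every
   variable [x] of the other literal; hence a deep variable is never nested in a
   compound argument nor aligned with a variable, and this makes [theta] a unifier. *)

Fixpoint size (t : term) : nat :=
  match t with
  | Var _ => 1
  | Fun _ ts => S (list_sum (map size ts))
  end.

Lemma size_le_list_sum t ts : In t ts -> size t <= list_sum (map size ts).
Proof.
  induction ts as [|u ts IH]; simpl; [tauto|].
  intros [<-|Hin]; [lia|specialize (IH Hin); lia].
Qed.

Lemma size_subst_var_le s x t : var_in x t -> size (s x) <= size (tsubst s t).
Proof.
  induction 1 as [|f ts t Hin _ IH]; simpl; [lia|].
  pose proof (size_le_list_sum _ _ (in_map (tsubst s) _ _ Hin)); lia.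
Qed.

Lemma size_subst_var_lt s x f ts :
  var_in x (Fun f ts) -> size (s x) < size (tsubst s (Fun f ts)).
Proof.
  inversion 1 as [|? ? t Hin Hx]; subst; simpl.
  pose proof (size_subst_var_le s x t Hx).
  pose proof (size_le_list_sum _ _ (in_map (tsubst s) _ _ Hin)); lia.
Qed.

Lemma compound_Fun_cons f u us : is_compound (Fun f (u :: us)).
Proof. split; intros [? ?]; discriminate. Qed.

Lemma compound_inv t : is_compound t -> exists f u us, t = Fun f (u :: us).
Proof.
  destruct t as [x|f [|u us]]; intros [Hvar Hconst].
  - exfalso; apply Hvar; exists x; reflexivity.
  - exfalso; apply Hconst; exists f; reflexivity.
  - eauto.
Qed.

Lemma compound_tsubst s t : is_compound t -> is_compound (tsubst s t).
Proof.
  intros Ht; destruct (compound_inv _ Ht) as (f & u & us & ->).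
  apply compound_Fun_cons.
Qed.

Lemma var_in_flat_arg x f us :
  (forall u, In u us -> var_or_const u) -> var_in x (Fun f us) -> In (Var x) us.
Proof.
  intros Hus Hx; inversion Hx as [|? ? u Hu Hxu]; subst.
  destruct (Hus u Hu) as [[a ->]|[c ->]]; inversion Hxu as [|? ? ? Hin]; subst.
  - exact Hu.
  - destruct Hin.
Qed.

Definition flat_term (t : term) : Prop :=
  is_var t \/ exists f us, t = Fun f us /\ forall u, In u us -> var_or_const u.

Lemma simple_lit_iff L : simple_lit L <-> forall t, In t (largs L) -> flat_term t.
Proof.
  unfold simple_lit, flat_term; split; intros H t Ht.
  - destruct (H t Ht) as [Hvar|[[c ->]|Hfun]]; [left; exact Hvar| |right; exact Hfun].
    right; exists c, []; split; [reflexivity|intros u []].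
  - destruct (H t Ht) as [Hvar|Hfun]; [left|right; right]; assumption.
Qed.

Definition occurs_in_args (x : nat) (l : list term) : Prop :=
  exists t, In t l /\ var_in x t.

Definition covering_args (l : list term) : Prop :=
  forall g, In g l -> is_compound g -> forall x, occurs_in_args x l -> var_in x g.

Lemma covering_lit_args L : covering_lit L -> covering_args (largs L).
Proof.
  intros H g Hg Hc x Hx.
  apply (H g (ex_intro _ g (conj Hg (st_refl g))) Hc x); exact Hx.
Qed.

Lemma covering_size_lt s l g x :
  covering_args l -> In g l -> is_compound g -> occurs_in_args x l ->
  size (s x) < size (tsubst s g).
Proof.
  intros Hcov Hg Hc Hx.
  pose proof (Hcov g Hg Hc x Hx) as Hxg.
  destruct (compound_inv _ Hc) as (f & u & us & ->).
  exact (size_subst_var_lt s x f _ Hxg).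
Qed.

Section Aligned.
Context {A B : Type}.

Lemma in_combine_swap (la : list A) (lb : list B) a b :
  In (a, b) (combine la lb) -> In (b, a) (combine lb la).
Proof.
  revert lb; induction la as [|a' la IH]; intros [|b' lb]; simpl; try tauto.
  intros [[= -> ->]|Hin]; [left; reflexivity|right; auto].
Qed.

Lemma map_eq_length (f : A -> B) la lb : map f la = map f lb -> length la = length lb.
Proof. intros H; rewrite <- (length_map f la), <- (length_map f lb), H; reflexivity. Qed.

Lemma in_combine_map_eq (f : A -> B) la lb a a' :
  map f la = map f lb -> In (a, a') (combine la lb) -> f a = f a'.
Proof.
  revert lb; induction la as [|a0 la IH]; intros [|a1 lb]; simpl; try tauto;
    intros H Hin; try discriminate.
  injection H as H0 H.
  destruct Hin as [[= -> ->]|Hin]; [exact H0|eauto].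
Qed.

Lemma in_combine_partner (la : list A) (lb : list B) a :
  length la = length lb -> In a la -> exists b, In (a, b) (combine la lb).
Proof.
  revert lb; induction la as [|a0 la IH]; intros [|b lb]; simpl; try tauto;
    intros Hlen Hin; try discriminate.
  destruct Hin as [->|Hin]; [eauto|].
  destruct (IH lb ltac:(lia) Hin) as [b' Hb']; eauto.
Qed.

Lemma map_eq_of_combine (f : A -> B) la lb :
  length la = length lb -> (forall a a', In (a, a') (combine la lb) -> f a = f a') ->
  map f la = map f lb.
Proof.
  revert lb; induction la as [|a la IH]; intros [|a' lb]; simpl; try tauto;
    intros Hlen H; try discriminate.
  f_equal; auto.
Qed.

End Aligned.

(* [Var 0] is an arbitrary placeholder: only the shape of these truncations matters. *)
Definition cut_atomic (t : term) : term :=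
  match t with Fun _ [] => t | _ => Var 0 end.

Definition cut_flat (t : term) : term :=
  match t with Var _ => Var 0 | Fun f ts => Fun f (map cut_atomic ts) end.

Lemma var_or_const_of_instance_cut_atomic eta u v :
  tsubst eta u = cut_atomic v -> var_or_const u.
Proof.
  destruct u as [x|f ts]; [left; exists x; reflexivity|].
  destruct v as [y|c [|w ws]]; simpl; intros H; try discriminate.
  injection H as -> H; destruct ts; [|discriminate].
  right; exists c; reflexivity.
Qed.

Lemma flat_of_instance_cut_flat eta u v : tsubst eta u = cut_flat v -> flat_term u.
Proof.
  destruct u as [x|f ts]; [left; exists x; reflexivity|].
  destruct v as [y|g ws]; simpl; intros H; try discriminate.
  injection H as -> Hargs.
  right; exists g, ts; split; [reflexivity|]; intros u Hu.
  assert (Hin : In (tsubst eta u) (map cut_atomic ws))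
    by (rewrite <- Hargs; apply in_map; exact Hu).
  apply in_map_iff in Hin as [w [Hw _]].
  eapply var_or_const_of_instance_cut_atomic; eauto.
Qed.

Section DeepVariable.
Variables (sigma : subst) (la lb : list term) (y : nat) (g : term).
Hypotheses (Sa : forall t, In t la -> flat_term t) (Sb : forall t, In t lb -> flat_term t)
  (Cb : covering_args lb) (Hunif : map (tsubst sigma) la = map (tsubst sigma) lb)
  (Hyg : In (Var y, g) (combine la lb)) (Hg : is_compound g).

Lemma size_lt_deep x : occurs_in_args x lb -> size (sigma x) < size (sigma y).
Proof.
  intros Hx.
  change (sigma y) with (tsubst sigma (Var y)).
  rewrite (in_combine_map_eq _ _ _ _ _ Hunif Hyg).
  exact (covering_size_lt sigma lb g x Cb (in_combine_r _ _ _ _ Hyg) Hg Hx).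
Qed.

Lemma deep_not_occurs_other : ~ occurs_in_args y lb.
Proof. intros Hy; pose proof (size_lt_deep y Hy); lia. Qed.

Lemma deep_not_aligned_var z : ~ In (Var y, Var z) (combine la lb).
Proof.
  intros Hyz.
  assert (Hz : occurs_in_args z lb)
    by (exists (Var z); split; [exact (in_combine_r _ _ _ _ Hyz)|constructor]).
  pose proof (size_lt_deep z Hz).
  pose proof (in_combine_map_eq _ _ _ _ _ Hunif Hyz) as E; simpl in E.
  rewrite E in *; lia.
Qed.

Lemma deep_not_nested r : In r la -> is_compound r -> ~ var_in y r.
Proof.
  intros Hr Hrc Hyr.
  destruct (Sa r Hr) as [[x ->]|(f & us & -> & Hus)];
    [destruct Hrc as [Hvar _]; apply Hvar; exists x; reflexivity|].
  pose proof (var_in_flat_arg _ _ _ Hus Hyr) as Hyus.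
  destruct (in_combine_partner la lb _ (map_eq_length _ _ _ Hunif) Hr) as [t Hrt].
  pose proof (in_combine_map_eq _ _ _ _ _ Hunif Hrt) as Ert.
  pose proof (in_combine_r _ _ _ _ Hrt) as Ht.
  destruct (Sb t Ht) as [[z ->]|(f' & vs & -> & Hvs)].
  - (* sigma y is a proper subterm of sigma z, which is smaller than sigma y *)
    assert (Hz : occurs_in_args z lb) by (exists (Var z); split; [exact Ht|constructor]).
    pose proof (size_lt_deep z Hz).
    pose proof (size_subst_var_lt sigma y f us Hyr).
    rewrite Ert in *; simpl in *; lia.
  - simpl in Ert; injection Ert as _ Eargs.
    destruct (in_combine_partner us vs _ (map_eq_length _ _ _ Eargs) Hyus) as [v Hyv].
    pose proof (in_combine_map_eq _ _ _ _ _ Eargs Hyv) as Ev; simpl in Ev.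
    pose proof (in_combine_r _ _ _ _ Hyv) as Hv.
    destruct (Hvs v Hv) as [[w ->]|[c ->]].
    + assert (Hw : occurs_in_args w lb)
        by (exists (Fun f' vs); split; [exact Ht|exact (vi_fun w f' vs _ Hv (vi_var w))]).
      pose proof (size_lt_deep w Hw); simpl in Ev; rewrite Ev in *; lia.
    + pose proof (in_combine_map_eq _ _ _ _ _ Hunif Hyg) as Eg; simpl in Eg, Ev.
      destruct (compound_inv _ (compound_tsubst sigma _ Hg)) as (? & ? & ? & E).
      rewrite <- Eg, Ev in E; discriminate.
Qed.

End DeepVariable.

Section ShallowUnifier.
Variables (sigma : subst) (la lb : list term).
Hypotheses (Sa : forall t, In t la -> flat_term t) (Sb : forall t, In t lb -> flat_term t)
  (Ca : covering_args la) (Cb : covering_args lb)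
  (Hunif : map (tsubst sigma) la = map (tsubst sigma) lb).

Definition deep_var (y : nat) : Prop :=
  exists g, is_compound g /\ (In (Var y, g) (combine la lb) \/ In (g, Var y) (combine la lb)).

Lemma deep_var_not_nested y r :
  deep_var y -> In r la \/ In r lb -> is_compound r -> ~ var_in y r.
Proof.
  intros (g & Hg & [Hyg|Hgy]) [Hr|Hr] Hrc Hyr.
  - exact (deep_not_nested sigma la lb y g Sa Sb Cb Hunif Hyg Hg r Hr Hrc Hyr).
  - exact (deep_not_occurs_other sigma la lb y g Cb Hunif Hyg Hg (ex_intro _ r (conj Hr Hyr))).
  - apply in_combine_swap in Hgy.
    exact (deep_not_occurs_other sigma lb la y g Ca (eq_sym Hunif) Hgy Hg
             (ex_intro _ r (conj Hr Hyr))).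
  - apply in_combine_swap in Hgy.
    exact (deep_not_nested sigma lb la y g Sb Sa Ca (eq_sym Hunif) Hgy Hg r Hr Hrc Hyr).
Qed.

Lemma aligned_vars_not_deep x z :
  In (Var x, Var z) (combine la lb) -> ~ deep_var x /\ ~ deep_var z.
Proof.
  intros Hxz.
  pose proof (in_combine_swap _ _ _ _ Hxz) as Hzx.
  split; intros (g & Hg & [Hvg|Hgv]).
  - exact (deep_not_aligned_var sigma la lb x g Cb Hunif Hvg Hg z Hxz).
  - apply in_combine_swap in Hgv.
    apply (deep_not_occurs_other sigma lb la x g Ca (eq_sym Hunif) Hgv Hg).
    exists (Var x); split; [exact (in_combine_l _ _ _ _ Hxz)|constructor].
  - apply (deep_not_occurs_other sigma la lb z g Cb Hunif Hvg Hg).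
    exists (Var z); split; [exact (in_combine_r _ _ _ _ Hxz)|constructor].
  - apply in_combine_swap in Hgv.
    exact (deep_not_aligned_var sigma lb la z g Ca (eq_sym Hunif) Hgv Hg x Hzx).
Qed.

Definition shallow_unifier : subst := fun y =>
  if excluded_middle_informative (deep_var y) then cut_flat (sigma y) else cut_atomic (sigma y).

Lemma shallow_unifier_flat_arg r f us :
  In r la \/ In r lb -> r = Fun f us -> (forall u, In u us -> var_or_const u) ->
  tsubst shallow_unifier r = cut_flat (tsubst sigma r).
Proof.
  intros Hr -> Hus; simpl; f_equal; rewrite map_map; apply map_ext_in.
  intros u Hu; destruct (Hus u Hu) as [[a ->]|[c ->]]; [simpl|reflexivity].
  unfold shallow_unifier; destruct (excluded_middle_informative (deep_var a)) as [Ha|_];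
    [exfalso|reflexivity].
  destruct us as [|u0 us]; [destruct Hu|].
  exact (deep_var_not_nested a _ Ha Hr (compound_Fun_cons _ _ _) (vi_fun a f _ _ Hu (vi_var a))).
Qed.

Lemma shallow_unifier_var_fun x t f vs :
  In (Var x, t) (combine la lb) \/ In (t, Var x) (combine la lb) ->
  t = Fun f vs -> sigma x = tsubst sigma t -> shallow_unifier x = cut_flat (sigma x).
Proof.
  intros Hxt -> Ex; unfold shallow_unifier.
  destruct (excluded_middle_informative (deep_var x)) as [_|Hshallow]; [reflexivity|].
  destruct vs as [|v vs]; [rewrite Ex; reflexivity|].
  exfalso; apply Hshallow; exists (Fun f (v :: vs)); split; [apply compound_Fun_cons|exact Hxt].
Qed.

Lemma shallow_unifier_unifies :
  map (tsubst shallow_unifier) la = map (tsubst shallow_unifier) lb.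
Proof.
  apply map_eq_of_combine; [exact (map_eq_length _ _ _ Hunif)|].
  intros s t Hst.
  pose proof (in_combine_map_eq _ _ _ _ _ Hunif Hst) as Est.
  pose proof (in_combine_l _ _ _ _ Hst) as Hs.
  pose proof (in_combine_r _ _ _ _ Hst) as Ht.
  destruct (Sa s Hs) as [[x ->]|(f & us & Es & Hus)];
    destruct (Sb t Ht) as [[z ->]|(f' & vs & Et & Hvs)].
  - destruct (aligned_vars_not_deep x z Hst) as [Hx Hz]; simpl in *.
    unfold shallow_unifier.
    destruct (excluded_middle_informative (deep_var x)); [contradiction|].
    destruct (excluded_middle_informative (deep_var z)); [contradiction|].
    rewrite Est; reflexivity.
  - simpl in Est; change (tsubst shallow_unifier (Var x)) with (shallow_unifier x).
    rewrite (shallow_unifier_flat_arg t f' vs (or_intror Ht) Et Hvs).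
    rewrite (shallow_unifier_var_fun x t f' vs (or_introl Hst) Et Est), Est; reflexivity.
  - simpl in Est; change (tsubst shallow_unifier (Var z)) with (shallow_unifier z).
    rewrite (shallow_unifier_flat_arg s f us (or_introl Hs) Es Hus).
    rewrite (shallow_unifier_var_fun z s f us (or_intror Hst) Es (eq_sym Est)), Est.
    reflexivity.
  - rewrite (shallow_unifier_flat_arg s f us (or_introl Hs) Es Hus).
    rewrite (shallow_unifier_flat_arg t f' vs (or_intror Ht) Et Hvs), Est; reflexivity.
Qed.

Lemma flat_of_shallow_factor eta :
  (forall y, shallow_unifier y = tsubst eta (sigma y)) ->
  forall t, In t la -> flat_term (tsubst sigma t).
Proof.
  intros Heta t Ht.
  pose proof (fun y => eq_sym (Heta y)) as Hfac; unfold shallow_unifier in Hfac.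
  destruct (Sa t Ht) as [[x ->]|(f & us & -> & Hus)]; simpl.
  - specialize (Hfac x).
    destruct (excluded_middle_informative (deep_var x)).
    + exact (flat_of_instance_cut_flat _ _ _ Hfac).
    + destruct (var_or_const_of_instance_cut_atomic _ _ _ Hfac) as [Hvar|[c ->]];
        [left; exact Hvar|right; exists c, []; split; [reflexivity|intros u []]].
  - right; exists f, (map (tsubst sigma) us); split; [reflexivity|].
    intros u Hu; apply in_map_iff in Hu as [u0 [<- Hu0]].
    destruct (Hus u0 Hu0) as [[a ->]|[c ->]]; [simpl|right; exists c; reflexivity].
    specialize (Hfac a).
    destruct (excluded_middle_informative (deep_var a)) as [Ha|_];
      [exfalso|exact (var_or_const_of_instance_cut_atomic _ _ _ Hfac)].
    destruct us as [|u us]; [destruct Hu0|].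
    exact (deep_var_not_nested a _ Ha (or_introl Ht) (compound_Fun_cons _ _ _)
             (vi_fun a f _ _ Hu0 (vi_var a))).
Qed.

End ShallowUnifier.

Lemma unifier_iff s L1 L2 :
  unifier s L1 L2 <->
  lsign L1 = lsign L2 /\ lpred L1 = lpred L2 /\
  map (tsubst s) (largs L1) = map (tsubst s) (largs L2).
Proof.
  destruct L1, L2; unfold unifier, lsubst; simpl; split.
  - intros [= -> -> ->]; auto.
  - intros (-> & -> & ->); reflexivity.
Qed.

Theorem mainTheorem6 (A1 A2 : literal) (sigma : subst) :
  simple_lit A1 -> covering_lit A1 ->
  simple_lit A2 -> covering_lit A2 ->
  mgu sigma A1 A2 ->
  simple_lit (lsubst sigma A1).
Proof.
  intros Hs1 Hc1 Hs2 Hc2 [Hu Hmgu].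
  rewrite simple_lit_iff in Hs1, Hs2.
  apply covering_lit_args in Hc1, Hc2.
  apply unifier_iff in Hu as (Hsign & Hpred & Hargs).
  destruct (Hmgu (shallow_unifier sigma (largs A1) (largs A2))) as [eta Heta].
  { apply unifier_iff; split; [exact Hsign|split; [exact Hpred|]].
    apply shallow_unifier_unifies; assumption. }
  apply simple_lit_iff; simpl; intros t Ht.
  apply in_map_iff in Ht as [s [<- Hs]].
  exact (flat_of_shallow_factor sigma _ _ Hs1 Hs2 Hc1 Hc2 Hargs eta Heta s Hs).
Qed.
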